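(* Let $(J,\mathcal F)$ and coefficients $w^S_j>0$ ($j\in S\in\mathcal F$) be as in the context. For every input $\mathbf c\in\mathbb R^J$, algorithms $\mathrm{AG}_1$ and $\mathrm{AG}_2$ are equivalent: when ties in the minimizations are broken in the same way, they produce the same output $(\mathit{ADMISSIBLE},\boldsymbol\pi,\boldsymbol\nu)$.
   Context: $J$ finite, $|J|=n$; $\mathcal F\subseteq2^J$, $\emptyset\in\mathcal F$, each nonempty $S\in\mathcal F$ has nonempty $\partial^-S=\{j\in S:S\setminus\{j\}\in\mathcal F\}$, each $S\in\mathcal F$, $S\ne J$, has $j\in J\setminus S$ with $S\cup\{j\}\in\mathcal F$. $\mathrm{AG}_1$ on input $\mathbf c$: $S_1=J$, $y^{S_1}=\min\{c_j/w^{S_1}_j:j\in\partial^-S_1\}$, $\pi_1$ a minimizer, $\nu_{\pi_1}=y^{S_1}$; for $k=2..n$: $S_k=S_{k-1}\setminus\{\pi_{k-1}\}$, $y^{S_k}=\min\{(c_j-\sum_{l=1}^{k-1}y^{S_l}w^{S_l}_j)/w^{S_k}_j:j\in\partial^-S_k\}$, $\pi_k$ a minimizer, $\nu_{\pi_k}=\nu_{\pi_{k-1}}+y^{S_k}$. $\mathrm{AG}_2$ on input $\mathbf c$: $S_1=J$, $\nu^{S_1}_j=c_j/w^{S_1}_j$ ($j\in J$), $\pi_1\in\arg\min\{\nu^{S_1}_j:j\in\partial^-S_1\}$, $\nu_{\pi_1}=\nu^{S_1}_{\pi_1}$; for $k=2..n$: $S_k=S_{k-1}\setminus\{\pi_{k-1}\}$,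 $\nu^{S_k}_j=\nu^{S_{k-1}}_j+\left(\frac{w^{S_{k-1}}_j}{w^{S_k}_j}-1\right)[\nu^{S_{k-1}}_j-\nu^{S_{k-1}}_{\pi_{k-1}}]$ for $j\in S_k$, $\pi_k\in\arg\min\{\nu^{S_k}_j:j\in\partial^-S_k\}$, $\nu_{\pi_k}=\nu^{S_k}_{\pi_k}$. Both set $\mathit{ADMISSIBLE}=\mathit{TRUE}$ if $\nu_{\pi_1}\le\cdots\le\nu_{\pi_n}$ and $\mathit{FALSE}$ otherwise. *)

From HB Require Import structures.
From mathcomp Require Import all_boot all_order all_algebra.
Set Implicit Arguments. Unset Strict Implicit. Unset Printing Implicit Defensive.
Import Order.TTheory GRing.Theory Num.Theory.
Local Open Scope ring_scope.

Section AG.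
Variables (R : realFieldType) (J : finType) (F : {set {set J}}).
Variable w : {set J} -> J -> R.
Variable c : J -> R.

Definition lbd (S : {set J}) : {set J} := [set j in S | (S :\ j) \in F].

Definition accessible_family : Prop :=
  [/\ set0 \in F,
      (forall S, S \in F -> S != set0 -> exists j, j \in lbd S) &
      (forall S, S \in F -> S != [set: J] ->
         exists2 j, j \notin S & (S :|: [set j]) \in F)].

Variable pi : seq J.   (* the sequence of choices pi_1, ..., pi_n (0-indexed) *)
Variable x0 : J.
Local Notation p k := (nth x0 pi k).

(* S_{k+1} (0-indexed: Sk 0 = J) *)
Definition Sk (k : nat) : {set J} := [set: J] :\: [set x in take k pi].

(* AG_1: acc1 k j = sum_{l<k} y^{S_l} w^{S_l}_j ; key1 k j the ratio minimized *)
Fixpoint acc1 (k : nat) : J -> R :=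
  match k with
  | 0 => fun _ => 0
  | k'.+1 => fun j =>
      acc1 k' j + ((c (p k') - acc1 k' (p k')) / w (Sk k') (p k')) * w (Sk k') j
  end.
Definition key1 (k : nat) (j : J) : R := (c j - acc1 k j) / w (Sk k) j.
Definition y1 (k : nat) : R := key1 k (p k).
Definition nu1 (k : nat) : R := \sum_(l < k.+1) y1 l.

(* AG_2: nu2 k j = nu^{S_{k+1}}_j *)
Fixpoint nu2 (k : nat) : J -> R :=
  match k with
  | 0 => fun j => c j / w [set: J] j
  | k'.+1 => fun j =>
      nu2 k' j + (w (Sk k') j / w (Sk k'.+1) j - 1) * (nu2 k' j - nu2 k' (p k'))
  end.
Definition key2 := nu2.
Definition nu2out (k : nat) : R := nu2 k (p k).

(* pi is a legal run (with some tie-breaking) of the algorithm minimizing key *)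
Definition valid_run (key : nat -> J -> R) : Prop :=
  size pi = #|J| /\
  forall k, (k < #|J|)%N ->
    p k \in lbd (Sk k) /\ forall j, j \in lbd (Sk k) -> key k (p k) <= key k j.

Definition AG1_valid := valid_run key1.
Definition AG2_valid := valid_run key2.

(* outputs: (ADMISSIBLE, pi, nu) ; nu given as the sequence nu_{pi_1},...,nu_{pi_n} *)
Definition AG1_nu : seq R := [seq nu1 k | k <- iota 0 #|J|].
Definition AG2_nu : seq R := [seq nu2out k | k <- iota 0 #|J|].
Definition admissible (nus : seq R) : bool := sorted <=%R nus.
Definition AG1_output := (admissible AG1_nu, pi, AG1_nu).
Definition AG2_output := (admissible AG2_nu, pi, AG2_nu).
End AG.

From HB Require Import structures.
From mathcomp Require Import all_boot all_order all_algebra.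
From mathcomp Require Import ring.
Set Implicit Arguments. Unset Strict Implicit. Unset Printing Implicit Defensive.
Import Order.TTheory GRing.Theory Num.Theory.
Local Open Scope ring_scope.

(** Along a run whose choices are boundary elements, induction on [k] shows
    that on [S_k] the ratio minimized by AG_1 equals AG_2's [nu^{S_k}_j] minus
    [nu_{pi_{k-1}}], the sum of the [y^{S_l}] chosen so far: AG_2's update is
    exactly the rescaling of the residual [c_j - sum_l y^{S_l} w^{S_l}_j] from
    [w^{S_{k-1}}_j] to [w^{S_k}_j].  So at each step both algorithms minimize
    the same function up to a constant, accept the same choices, and
    [nu_{pi_k} = nu_{pi_{k-1}} + y^{S_k} = nu^{S_k}_{pi_k}]. *)

Lemma accessible_setT (J : finType) (F : {set {set J}}) :
  accessible_family F -> [set: J] \in F.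
Proof.
case=> F0 _ Fext.
case: (arg_maxnP (fun S : {set J} => #|S|) F0) => S SF Smax.
have [<- //|ST] := eqVneq S [set: J].
have [j jS Sj] := Fext S SF ST.
by have := Smax _ Sj; rewrite /geq setUC cardsU1 jS /= ltnn.
Qed.

Lemma lbd_sub (J : finType) (F : {set {set J}}) S : lbd F S \subset S.
Proof. by apply/subsetP => j; rewrite inE => /andP[]. Qed.

Section Equivalence.
Variables (R : realFieldType) (J : finType) (F : {set {set J}}).
Variable w : {set J} -> J -> R.
Hypothesis hF : accessible_family F.
Hypothesis hw : forall S, S \in F -> forall j, j \in S -> 0 < w S j.
Variables (c : J -> R) (pi : seq J) (x0 : J).
Local Notation p k := (nth x0 pi k).

Lemma Sk0 : Sk pi 0 = [set: J].
Proof. by apply/setP => x; rewrite /Sk take0 !inE. Qed.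

Lemma SkS k : (k < size pi)%N -> Sk pi k.+1 = Sk pi k :\ p k.
Proof.
move=> hk; apply/setP => x.
rewrite /Sk (take_nth x0 hk) !inE mem_rcons in_cons.
by case: (x == p k); case: (x \in take k pi).
Qed.

Definition boundary_prefix k := forall l, (l < k)%N -> p l \in lbd F (Sk pi l).

Lemma boundary_prefixW k : boundary_prefix k.+1 -> boundary_prefix k.
Proof. by move=> hP l hl; apply: hP; apply: ltnW. Qed.

Lemma boundary_prefix_mem k : boundary_prefix k.+1 -> p k \in Sk pi k.
Proof. by move=> hP; apply: (subsetP (lbd_sub F _)); apply: hP. Qed.

Lemma Sk_in_F k : (k <= size pi)%N -> boundary_prefix k -> Sk pi k \in F.
Proof.
elim: k => [|k IH] hk hP; first by rewrite Sk0 accessible_setT.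
by have := hP k (ltnSn k); rewrite SkS // inE => /andP[].
Qed.

Definition ysum k := \sum_(l < k) y1 w c pi x0 l.

Lemma key1_nu2 k : (k <= size pi)%N -> boundary_prefix k ->
  {in Sk pi k, forall j, key1 w c pi x0 k j = nu2 w c pi x0 k j - ysum k}.
Proof.
elim: k => [|k IH] hk hP j; first by rewrite /key1 /ysum big_ord0 Sk0 !subr0.
have hP' := boundary_prefixW hP.
have pkS := boundary_prefix_mem hP.
rewrite SkS // => /setD1P [_ jS].
have {}IH := IH (ltnW hk) hP'.
have wj : w (Sk pi k) j != 0 by rewrite gt_eqF // hw // Sk_in_F // ltnW.
have cj : c j - acc1 w c pi x0 k j
          = w (Sk pi k) j * (nu2 w c pi x0 k j - ysum k).
  by rewrite -IH // /key1 mulrC divfK.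
have key1S : key1 w c pi x0 k.+1 j = (c j - acc1 w c pi x0 k j
    - y1 w c pi x0 k * w (Sk pi k) j) / w (Sk pi k.+1) j.
  by rewrite /key1 /= opprD addrA.
rewrite key1S cj /ysum big_ord_recr /= -/(ysum k) /y1 IH //.
ring.
Qed.

Lemma valid_run_boundary_prefix (key : nat -> J -> R) k :
  valid_run F pi x0 key -> (k <= #|J|)%N -> boundary_prefix k.
Proof. by case=> _ H hk l hl; case: (H l (leq_trans hl hk)). Qed.

Lemma valid_run_shift (key key' : nat -> J -> R) (d : nat -> R) :
  (forall k, (k < size pi)%N -> boundary_prefix k ->
     {in Sk pi k, forall j, key' k j = key k j + d k}) ->
  valid_run F pi x0 key -> valid_run F pi x0 key'.
Proof.
move=> E V; have [hs H] := V; split=> // k hk.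
have [hp hmin] := H k hk; split=> // j hj.
have hk' : (k < size pi)%N by rewrite hs.
have Ek := E k hk' (valid_run_boundary_prefix V (ltnW hk)).
have sub := subsetP (lbd_sub F (Sk pi k)).
rewrite (Ek _ (sub _ hp)) (Ek _ (sub _ hj)) lerD2r.
exact: hmin.
Qed.

Lemma nu1_nu2out k : (k < size pi)%N -> boundary_prefix k.+1 ->
  nu1 w c pi x0 k = nu2out w c pi x0 k.
Proof.
move=> hk hP; rewrite /nu1 big_ord_recr /= -/(ysum k) /y1.
rewrite (key1_nu2 (ltnW hk) (boundary_prefixW hP) (boundary_prefix_mem hP)).
by rewrite addrC subrK.
Qed.

End Equivalence.

Theorem theorem3 (R : realFieldType) (J : finType) (F : {set {set J}})
  (w : {set J} -> J -> R)
  (hF : accessible_family F)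
  (hw : forall S, S \in F -> forall j, j \in S -> 0 < w S j)
  (c : J -> R) (pi : seq J) (x0 : J) :
  (AG1_valid F w c pi x0 <-> AG2_valid F w c pi x0) /\
  (AG1_valid F w c pi x0 -> AG1_output w c pi x0 = AG2_output w c pi x0).
Proof.
have key12 k j hk hP :=
  key1_nu2 hF hw c (pi := pi) (x0 := x0) (k := k) (x := j) (ltnW hk) hP.
split; first split.
- apply: (valid_run_shift (d := ysum w c pi x0)) => k hk hP j hj.
  by rewrite (key12 _ _ hk hP hj) subrK.
- apply: (valid_run_shift (d := fun k => - ysum w c pi x0 k)) => k hk hP j hj.
  by rewrite (key12 _ _ hk hP hj).
move=> V; have [hs _] := V.
have nuE : AG1_nu w c pi x0 = AG2_nu w c pi x0.
  apply/eq_in_map => k; rewrite mem_iota add0n => /andP [_ hk].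
  apply: (nu1_nu2out hF hw); first by rewrite hs.
  exact: valid_run_boundary_prefix V hk.
by rewrite /AG1_output /AG2_output nuE.
Qed.
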